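(* Let $X$ be an exponential vector space over a field $K$. A subset of $X\smallsetminus X_0$ is a basis of $X\smallsetminus X_0$ if and only if it is a minimal generating subset of $X\smallsetminus X_0$ (i.e. it generates $X\smallsetminus X_0$ and no proper subset of it generates $X\smallsetminus X_0$).
   Context: An exponential vector space (evs) over a field $K$ is a partially ordered set $(X,\leq)$ with a binary operation $+$ on $X$ and a map $K\times X\to X$, $(\alpha,x)\mapsto \alpha x$, such that: (A1) $(X,+)$ is a commutative semigroup with identity $\theta$; (A2) $x\leq y$ implies $x+z\leq y+z$ and $\alpha x\leq \alpha y$ for all $z\in X$, $\alpha\in K$; (A3) $\alpha(x+y)=\alpha x+\alpha y$, $\alpha(\beta x)=(\alpha\beta)x$, $(\alpha+\beta)x\leq \alpha x+\beta x$, $1x=x$; (A4) $\alpha x=\theta$ iff $\alpha=0$ or $x=\theta$; (A5) $x+(-1)x=\theta$ iff $x\in X_0$, where $X_0:=\{z\in X: y\not\leq z \text{ for all } y\in X\smallsetminus\{z\}\}$ (the set of minimal elements, called the primitive space; it is a vector space over $K$); (A6) for each $x\in X$ there is $p\in X_0$ with $p\leq x$. For $x\in X\smallsetminus X_0$ let $L(x):=\{z\in X: z\geq \alpha x+p \text{ for some } \alpha\in K\smallsetminus\{0\},\ p\in X_0\}$. A subset $B\subseteq X\smallsetminus X_0$ generates $X\smallsetminus X_0$ if $X\smallsetminus X_0=\bigcup_{b\in B}L(b)$. Elements $x,y\in X\smallsetminus X_0$ are orderly dependent if $x\in L(y)$ or $y\in L(x)$, and orderly independent otherwise; $B\subseteq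 X\smallsetminus X_0$ is orderly independent if any two distinct members of $B$ are orderly independent. A basis of $X\smallsetminus X_0$ is an orderly independent subset of $X\smallsetminus X_0$ that generates $X\smallsetminus X_0$. *)

From mathcomp Require Import all_boot all_algebra.
Set Implicit Arguments. Unset Strict Implicit. Unset Printing Implicit Defensive.
Import GRing.Theory.
Local Open Scope ring_scope.

Section EVS.
Variables (K : fieldType) (X : Type).
Variables (le : X -> X -> Prop) (add : X -> X -> X) (smul : K -> X -> X)
  (theta : X).

(* primitive space X_0: the minimal elements of (X, le) *)
Definition prim (z : X) : Prop := forall y : X, y <> z -> ~ le y z.

Record is_evs : Prop := IsEvs {
  le_refl : forall x, le x x;
  le_antisym : forall x y, le x y -> le y x -> x = y;
  le_trans : forall x y z, le x y -> le y z -> le x z;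
  addA : forall x y z, add x (add y z) = add (add x y) z;
  addC : forall x y, add x y = add y x;
  add0x : forall x, add theta x = x;
  le_add : forall x y z, le x y -> le (add x z) (add y z);
  le_smul : forall x y (a : K), le x y -> le (smul a x) (smul a y);
  smulDr : forall (a : K) x y, smul a (add x y) = add (smul a x) (smul a y);
  smulA : forall (a b : K) x, smul a (smul b x) = smul (a * b) x;
  smulDl_le : forall (a b : K) x, le (smul (a + b) x) (add (smul a x) (smul b x));
  smul1 : forall x, smul 1 x = x;
  smul_eq0 : forall (a : K) x, smul a x = theta <-> (a = 0 \/ x = theta);
  addN_prim : forall x, add x (smul (-1) x) = theta <-> prim x;
  prim_below : forall x, exists p, prim p /\ le p x
}.

Definition Lset (x : X) : X -> Prop :=
  fun z => exists (a : K) (p : X), a <> 0 /\ prim p /\ le (add (smul a x) p) z.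

Definition nonprim_subset (B : X -> Prop) : Prop :=
  forall b, B b -> ~ prim b.

Definition generates (B : X -> Prop) : Prop :=
  forall z, ~ prim z <-> exists b, B b /\ Lset b z.

Definition orderly_dependent (x y : X) : Prop := Lset y x \/ Lset x y.

Definition orderly_independent_set (B : X -> Prop) : Prop :=
  forall x y, B x -> B y -> x <> y -> ~ orderly_dependent x y.

Definition is_basis (B : X -> Prop) : Prop :=
  nonprim_subset B /\ orderly_independent_set B /\ generates B.

Definition minimal_generating (B : X -> Prop) : Prop :=
  generates B /\
  forall B' : X -> Prop, (forall x, B' x -> B x) -> (exists x, B x /\ ~ B' x) ->
    ~ generates B'.

End EVS.

From Pilot Require Import Defs.
From mathcomp Require Import all_boot all_algebra.
From Stdlib Require Import Classical.
Set Implicit Arguments.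
Unset Strict Implicit.
Import GRing.Theory.
Local Open Scope ring_scope.

(* Since X_0 is closed under sums and scalar multiples, the sets L(x) are
   transitive: z in L(y) and y in L(x) give z in L(x).  So a generator lying in
   L of another generator can be dropped, and a minimal generating set is
   orderly independent.  Conversely, an orderly independent generating set B
   is minimal: a generating subset missing b in B would have to contain some
   b' <> b with b in L(b'). *)

Section ExponentialVectorSpace.
Variables (K : fieldType) (X : Type) (le : X -> X -> Prop)
  (add : X -> X -> X) (smul : K -> X -> X) (theta : X).
Hypothesis HX : is_evs le add smul theta.

Let L := Lset le add smul.

Lemma addACA_evs x y z t : add (add x y) (add z t) = add (add x z) (add y t).
Proof.
rewrite -(Defs.addA HX) (Defs.addA HX y) (Defs.addC HX y z).
by rewrite -(Defs.addA HX z) (Defs.addA HX).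
Qed.

Lemma prim_add p q : prim le p -> prim le q -> prim le (add p q).
Proof.
move=> /(Defs.addN_prim HX) Np /(Defs.addN_prim HX) Nq.
apply/(Defs.addN_prim HX).
by rewrite (Defs.smulDr HX) addACA_evs Np Nq (Defs.add0x HX).
Qed.

Lemma prim_smul (a : K) p : prim le p -> prim le (smul a p).
Proof.
move=> /(Defs.addN_prim HX) Np; apply/(Defs.addN_prim HX).
rewrite (Defs.smulA HX) mulrC -(Defs.smulA HX) -(Defs.smulDr HX) Np.
by apply/(Defs.smul_eq0 HX); right.
Qed.

Lemma Lset_trans x y z : L x y -> L y z -> L x z.
Proof.
move=> [a [p [a_neq0 [prim_p le_y]]]] [b [q [b_neq0 [prim_q le_z]]]].
exists (b * a), (add (smul b p) q); split.
  by apply/eqP; rewrite mulf_neq0 //; apply/eqP.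
split; first by apply: prim_add => //; apply: prim_smul.
apply: (Defs.le_trans HX) le_z; rewrite (Defs.addA HX); apply: (Defs.le_add HX).
by rewrite -(Defs.smulA HX) -(Defs.smulDr HX); apply: (Defs.le_smul HX).
Qed.

Lemma generates_setD1 (B : X -> Prop) x y :
  generates le add smul B -> B y -> y <> x -> L y x ->
  generates le add smul (fun z => B z /\ z <> x).
Proof.
move=> genB By y_neq_x Lyx z; split; last first.
  by move=> [b [[Bb _] Lbz]]; apply/(genB z); exists b.
move=> /(genB z) [b [Bb Lbz]].
have [b_eq_x | b_neq_x] := classic (b = x); last by exists b.
by rewrite b_eq_x in Lbz; exists y; split; last exact: Lset_trans Lbz.
Qed.

Lemma minimal_generating_indep (B : X -> Prop) :
  minimal_generating le add smul B -> orderly_independent_set le add smul B.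
Proof.
move=> [genB minB].
suff notL x y : B x -> B y -> x <> y -> ~ L y x.
  move=> x y Bx By x_neq_y [Lyx | Lxy]; first exact: notL Lyx.
  by apply: (notL y x) Lxy => // y_eq_x; apply: x_neq_y.
move=> Bx By x_neq_y Lyx.
apply: (minB (fun z => B z /\ z <> x)); first by move=> z [].
  by exists x; split => // -[].
by apply: (generates_setD1 genB By _ Lyx) => y_eq_x; apply: x_neq_y.
Qed.

End ExponentialVectorSpace.

Lemma basis_minimal_generating (K : fieldType) (X : Type)
  (le : X -> X -> Prop) (add : X -> X -> X) (smul : K -> X -> X)
  (B : X -> Prop) :
  is_basis le add smul B -> minimal_generating le add smul B.
Proof.
move=> [nonprimB [indepB genB]]; split=> // B' subB' [x [Bx notB'x]] genB'.
have [b [B'b Lbx]] := proj1 (genB' x) (nonprimB x Bx).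
have x_neq_b : x <> b by move=> x_eq_b; apply: notB'x; rewrite x_eq_b.
by apply: (indepB x b Bx (subB' b B'b) x_neq_b); left.
Qed.

Theorem mainTheorem2 (K : fieldType) (X : Type) (le : X -> X -> Prop)
  (add : X -> X -> X) (smul : K -> X -> X) (theta : X)
  (HX : is_evs le add smul theta) (B : X -> Prop) :
  nonprim_subset le B ->
  (is_basis le add smul B <-> minimal_generating le add smul B).
Proof.
move=> nonprimB; split; first exact: basis_minimal_generating.
move=> minB; split=> //; split; last by case: minB.
exact: (minimal_generating_indep HX minB).
Qed.
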